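(* Let $p \in \beta\mathbb{N}$. If $p$ is prime with respect to $\tilde{\mid}$-divisibility, then $p$ is prime with respect to each of $\mid_l$, $\mid_r$ and $\mid_m$ divisibility.
   Context: $\mathbb{N}=\{1,2,3,\dots\}$ with the discrete topology; $\beta\mathbb{N}$ is its Stone–Čech compactification, identified with the set of ultrafilters on $\mathbb{N}$, where each $n\in\mathbb{N}$ is identified with the principal ultrafilter at $n$. Multiplication on $\beta\mathbb{N}$: for $x,y\in\beta\mathbb{N}$ and $A\subseteq\mathbb{N}$, $A\in x\cdot y$ iff $\{n\in\mathbb{N}: A/n\in y\}\in x$, where $A/n=\{m\in\mathbb{N}: mn\in A\}$. Divisibilities on $\beta\mathbb{N}$: $x\mid_l y$ iff $y=zx$ for some $z\in\beta\mathbb{N}$; $x\mid_r y$ iff $y=xz$ for some $z\in\beta\mathbb{N}$; $x\mid_m y$ iff $y=zxw$ for some $z,w\in\beta\mathbb{N}$; $x\,\tilde{\mid}\,y$ iff for every $A\in x$, the set $\{n\in\mathbb{N}:\exists a\in A,\ a\mid n\}$ belongs to $y$. An element $p\in\beta\mathbb{N}\setminus\{1\}$ is prime with respect to a given divisibility relation if the only elements dividing $p$ in that relation are $1$ and $p$. *)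

(* beta N = ultrafilters on N = {1,2,3,...}, represented as
   families of subsets of nat that contain the set of positive naturals. *)
From Stdlib Require Import Arith PeanoNat.

Definition uf := (nat -> Prop) -> Prop.

Definition is_uf (U : uf) : Prop :=
  U (fun n => 0 < n) /\
  ~ U (fun _ => False) /\
  (forall A B : nat -> Prop, U A -> (forall n, A n -> B n) -> U B) /\
  (forall A B : nat -> Prop, U A -> U B -> U (fun n => A n /\ B n)) /\
  (forall A : nat -> Prop, U A \/ U (fun n => ~ A n)).

Definition uf_eq (x y : uf) : Prop := forall A, x A <-> y A.

Definition principal (n : nat) : uf := fun A => A n.
Definition uf_one : uf := principal 1.

Definition uf_mul (x y : uf) : uf :=
  fun A => x (fun n => y (fun m => A (m * n))).

Definition ldiv (x y : uf) : Prop :=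
  exists z, is_uf z /\ uf_eq y (uf_mul z x).
Definition rdiv (x y : uf) : Prop :=
  exists z, is_uf z /\ uf_eq y (uf_mul x z).
Definition mdiv (x y : uf) : Prop :=
  exists z w, is_uf z /\ is_uf w /\ uf_eq y (uf_mul (uf_mul z x) w).
Definition tdiv (x y : uf) : Prop :=
  forall A, x A -> y (fun n => exists a, A a /\ Nat.divide a n).

Definition uf_prime (R : uf -> uf -> Prop) (p : uf) : Prop :=
  ~ uf_eq p uf_one /\
  forall x, is_uf x -> R x p -> uf_eq x uf_one \/ uf_eq x p.

(* Each of |_l, |_r, |_m is contained in ~|: if A is in x, then the multiples
   of A form a set in both z x and x z, and ~| is transitive, so it also
   holds between x and z x w.  A relation contained in ~| has no more
   nontrivial divisors of p than ~| does. *)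
From Stdlib Require Import PeanoNat.

Definition upward_closed (x : uf) : Prop :=
  forall A B : nat -> Prop, x A -> (forall n, A n -> B n) -> x B.

Definition multiples (A : nat -> Prop) (n : nat) : Prop :=
  exists a, A a /\ Nat.divide a n.

Lemma is_uf_upward_closed (x : uf) : is_uf x -> upward_closed x.
Proof. intros (_ & _ & hmono & _). exact hmono. Qed.

Lemma upward_closed_mul (z x : uf) :
  upward_closed z -> upward_closed x -> upward_closed (uf_mul z x).
Proof.
  intros hz hx A B HA HAB. apply (hz _ _ HA). intros n Hn.
  apply (hx _ _ Hn). intro m; apply HAB.
Qed.

Lemma uf_full (x : uf) (P : nat -> Prop) : is_uf x -> (forall n, P n) -> x P.
Proof.
  intros hx HP. apply (is_uf_upward_closed x hx (fun n => 0 < n)); [apply hx |].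
  intros n _; apply HP.
Qed.

Lemma tdiv_mull (x z : uf) : upward_closed x -> is_uf z -> tdiv x (uf_mul z x).
Proof.
  intros hx hz A HA. unfold uf_mul. apply uf_full; [exact hz |]. intro k.
  apply (hx A); [exact HA |]. intros n Hn.
  exists n. split; [exact Hn | apply Nat.divide_mul_l, Nat.divide_refl].
Qed.

Lemma tdiv_mulr (x z : uf) : upward_closed x -> is_uf z -> tdiv x (uf_mul x z).
Proof.
  intros hx hz A HA. unfold uf_mul. apply (hx A); [exact HA |]. intros n Hn.
  apply uf_full; [exact hz |]. intro k.
  exists n. split; [exact Hn | apply Nat.divide_mul_r, Nat.divide_refl].
Qed.

Lemma tdiv_trans (x y w : uf) : upward_closed w -> tdiv x y -> tdiv y w -> tdiv x w.
Proof.
  intros hw Hxy Hyw A HA.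
  apply (hw (multiples (multiples A))); [exact (Hyw _ (Hxy A HA)) |].
  intros n (b & (a & Ha & Hab) & Hbn). exists a. split; [exact Ha |].
  exact (Nat.divide_trans a b n Hab Hbn).
Qed.

Lemma tdiv_eqr (x y y' : uf) : uf_eq y y' -> tdiv x y -> tdiv x y'.
Proof. intros He Hxy A HA. apply He, Hxy, HA. Qed.

Lemma ldiv_tdiv (x p : uf) : is_uf x -> ldiv x p -> tdiv x p.
Proof.
  intros hx (z & hz & He). apply (tdiv_eqr x (uf_mul z x)).
  - intro A; symmetry; apply He.
  - exact (tdiv_mull x z (is_uf_upward_closed x hx) hz).
Qed.

Lemma rdiv_tdiv (x p : uf) : is_uf x -> rdiv x p -> tdiv x p.
Proof.
  intros hx (z & hz & He). apply (tdiv_eqr x (uf_mul x z)).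
  - intro A; symmetry; apply He.
  - exact (tdiv_mulr x z (is_uf_upward_closed x hx) hz).
Qed.

Lemma mdiv_tdiv (x p : uf) : is_uf x -> mdiv x p -> tdiv x p.
Proof.
  intros hx (z & w & hz & hw & He). apply (tdiv_eqr x (uf_mul (uf_mul z x) w)).
  - intro A; symmetry; apply He.
  - pose proof (is_uf_upward_closed x hx) as hx'.
    pose proof (upward_closed_mul z x (is_uf_upward_closed z hz) hx') as hzx.
    apply (tdiv_trans x (uf_mul z x)).
    + exact (upward_closed_mul _ w hzx (is_uf_upward_closed w hw)).
    + exact (tdiv_mull x z hx' hz).
    + exact (tdiv_mulr _ w hzx hw).
Qed.

Lemma uf_prime_sub (R S : uf -> uf -> Prop) (p : uf) :
  (forall x, is_uf x -> R x p -> S x p) -> uf_prime S p -> uf_prime R p.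
Proof.
  intros HRS [Hp1 HS]. split; [exact Hp1 |].
  intros x hx HR. exact (HS x hx (HRS x hx HR)).
Qed.

Theorem lemma1p4 (p : uf) (hp : is_uf p) :
  uf_prime tdiv p ->
  uf_prime ldiv p /\ uf_prime rdiv p /\ uf_prime mdiv p.
Proof.
  intro Hprime. split; [| split].
  - exact (uf_prime_sub ldiv tdiv p (fun x hx => ldiv_tdiv x p hx) Hprime).
  - exact (uf_prime_sub rdiv tdiv p (fun x hx => rdiv_tdiv x p hx) Hprime).
  - exact (uf_prime_sub mdiv tdiv p (fun x hx => mdiv_tdiv x p hx) Hprime).
Qed.
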